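(* Let $Q\in\mathbb{C}^\times$ and let $\alpha_0,\alpha_1,\alpha_2$ be nonzero complex parameters with $\alpha_0\alpha_1\alpha_2=Q$; indices of $\alpha_i,\tau_i,\overline{\tau}_i,T_i$ are read modulo $3$ (so index $3$ means index $0$). Let $\tau_i,\overline{\tau}_i$ ($i\in\mathbb{Z}/3\mathbb{Z}$) be functions of the parameters, and let the translations $T_1,T_2,T_3$ act on the parameters by $T_1:(\alpha_0,\alpha_1,\alpha_2)\mapsto(Q\alpha_0,Q^{-1}\alpha_1,\alpha_2)$, $T_2:(\alpha_0,\alpha_1,\alpha_2)\mapsto(\alpha_0,Q\alpha_1,Q^{-1}\alpha_2)$, $T_3:(\alpha_0,\alpha_1,\alpha_2)\mapsto(Q^{-1}\alpha_0,\alpha_1,Q\alpha_2)$, and on functions $F$ of the parameters by $T_j(F)(\alpha)=F(T_j(\alpha))$. Suppose that for each $i=1,2,3$ the following identities hold: \[T_i(\tau_{i-1})=\tau_i,\qquad T_i(\overline{\tau}_{i-1})=\overline{\tau}_i,\] \[T_i(\tau_{i+1})=\frac{\alpha_{i-1}^6\tau_i\overline{\tau}_{i+1}+Q^2\overline{\tau}_i\tau_{i+1}}{Q\alpha_{i-1}^3\overline{\tau}_{i-1}},\qquad T_i(\overline{\tau}_{i+1})=\frac{Q^2\alpha_{i-1}^6\tau_{i+1}\overline{\tau}_i+\overline{\tau}_{i+1}\tau_i}{Q\alpha_{i-1}^3\tau_{i-1}}.\] Then for each $i=1,2,3$ the following identities also hold: \[T_i(\tau_i)=\frac{1}{\alpha_{i+1}^3\alpha_{i-1}^6}\frac{\tau_i^2}{\tau_{i-1}}+\frac{\alpha_{i+1}\alpha_{i-1}^4}{\alpha_i^2}\frac{\tau_i\overline{\tau}_i}{\overline{\tau}_{i-1}}+\frac{\alpha_i^2\alpha_{i-1}^2}{\alpha_{i+1}}\frac{\overline{\tau}_i\tau_i\tau_{i+1}}{\overline{\tau}_{i+1}\tau_{i-1}}+\alpha_{i+1}^3\frac{\overline{\tau}_i^2\tau_{i+1}}{\overline{\tau}_{i+1}\overline{\tau}_{i-1}},\]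 \[T_i(\overline{\tau}_i)=\frac{1}{\alpha_{i+1}^3\alpha_{i-1}^6}\frac{\overline{\tau}_i^2}{\overline{\tau}_{i-1}}+\alpha_i^2\alpha_{i+1}^5\alpha_{i-1}^8\frac{\tau_i\overline{\tau}_i}{\tau_{i-1}}+\frac{1}{\alpha_i^2\alpha_{i+1}^5\alpha_{i-1}^2}\frac{\tau_i\overline{\tau}_i\overline{\tau}_{i+1}}{\tau_{i+1}\overline{\tau}_{i-1}}+\alpha_{i+1}^3\frac{\tau_i^2\overline{\tau}_{i+1}}{\tau_{i+1}\tau_{i-1}}.\]
   Context: This arises in the $\tau$-function formulation of the $q$-Painlevé III equation with affine Weyl group symmetry of type $(A_2+A_1)^{(1)}$: $q=Q^6$, $a_i=\alpha_i^6$ with $a_0a_1a_2=q$, and the translations are $T_1=\pi s_2s_1$, $T_2=s_1\pi s_2$, $T_3=s_2s_1\pi$, which commute and satisfy $T_1T_2T_3=1$. The identities are understood as identities of functions of the parameters (coefficients are evaluated at the unshifted parameters). *)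

From HB Require Import structures.
From mathcomp Require Import all_boot all_order all_algebra.
Set Implicit Arguments. Unset Strict Implicit. Unset Printing Implicit Defensive.
Import Order.TTheory GRing.Theory Num.Theory.
Local Open Scope ring_scope.

Definition par (K : Type) := (K * K * K)%type.

Definition md3 (n : nat) : 'I_3 := Ordinal (ltn_pmod n (isT : (0 < 3)%N)).

Definition alp (K : Type) (p : par K) (n : nat) : K :=
  match (n %% 3)%N with
  | 0%N => p.1.1
  | 1%N => p.1.2
  | _ => p.2
  end.

Definition admissible (K : fieldType) (Q : K) (p : par K) : Prop :=
  [/\ p.1.1 != 0, p.1.2 != 0, p.2 != 0 & p.1.1 * p.1.2 * p.2 = Q].

Definition Tpar (K : fieldType) (Q : K) (j : nat) (p : par K) : par K :=
  match (j %% 3)%N with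
  | 1%N => (Q * p.1.1, Q^-1 * p.1.2, p.2)
  | 2%N => (p.1.1, Q * p.1.2, Q^-1 * p.2)
  | _ => (Q^-1 * p.1.1, p.1.2, Q * p.2)
  end.

Definition Tact (K : fieldType) (Q : K) (j : nat) (F : par K -> K) : par K -> K :=
  fun p => F (Tpar Q j p).

From HB Require Import structures.
From mathcomp Require Import all_boot all_order all_algebra.
From mathcomp Require Import ring.
Set Implicit Arguments. Unset Strict Implicit. Unset Printing Implicit Defensive.
Import Order.TTheory GRing.Theory Num.Theory.
Local Open Scope ring_scope.

(* Since T_{i+2} T_{i+1} T_i = 1, the relations of T_{i+1} taken at the point
   T_i(alpha) and pushed forward by T_{i+2} express tau_{i+1} and taub_{i+1}
   at alpha through the values at T_i(alpha).  The unknowns T_i(taub_i) and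
   T_i(tau_i) occur there only as a denominator, once each, so they can be
   solved for; the T_i relations then eliminate T_i(tau_{i+1}) and
   T_i(taub_{i+1}), and the constraint alpha_0 alpha_1 alpha_2 = Q reduces what
   is left to the stated Laurent polynomials. *)

Lemma mod3_ind (P : nat -> Prop) :
  P 0%N -> P 1%N -> P 2%N -> (forall n, P n -> P n.+3) -> forall n, P n.
Proof.
move=> P0 P1 P2 PS n.
suff [] : [/\ P n, P n.+1 & P n.+2] by [].
by elim: n => [|n [Pn Pn1 Pn2]]; split; last exact: PS.
Qed.

Lemma md3S3 n : md3 n.+3 = md3 n.
Proof. by apply: val_inj; rewrite /= -addn3 modnDr. Qed.

Lemma alpS3 (K : Type) (p : par K) n : alp p n.+3 = alp p n.
Proof. by rewrite /alp -addn3 modnDr. Qed.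

Section Translations.

Variables (K : fieldType) (Q : K).

Lemma TparS3 n : Tpar Q n.+3 = Tpar Q n.
Proof. by rewrite /Tpar -addn3 modnDr. Qed.

Lemma TactS3 n : Tact Q n.+3 = Tact Q n.
Proof. by rewrite /Tact TparS3. Qed.

Hypothesis Qnz : Q != 0.

Lemma Tpar_cycle n p : Tpar Q n.+3 (Tpar Q n.+2 (Tpar Q n.+1 p)) = p.
Proof.
elim/mod3_ind: n => [|||n]; last by rewrite !TparS3.
all: by case: p => [[x0 x1] x2]; rewrite /Tpar /= ?mulKf ?mulVKf.
Qed.

Lemma alp_Tpar n p : alp (Tpar Q n.+1 p) n.+1 = Q^-1 * alp p n.+1.
Proof.
elim/mod3_ind: n => [|||n]; last by rewrite TparS3 !alpS3.
all: by case: p => [[x0 x1] x2].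
Qed.

Lemma Tpar_admissible n p : admissible Q p -> admissible Q (Tpar Q n p).
Proof.
case: p => [[x0 x1] x2] [/= x0nz x1nz x2nz prodQ].
rewrite /Tpar; case: (n %% 3)%N => [|[|[|_]]]; split;
  rewrite /= ?mulf_neq0 ?invr_eq0 // -prodQ; field; by rewrite x0nz x1nz x2nz.
Qed.

End Translations.

Lemma alp_prod (K : fieldType) (Q : K) p n :
  admissible Q p -> alp p n * alp p n.+1 * alp p n.+2 = Q.
Proof.
case: p => [[x0 x1] x2] [_ _ _ <-].
by elim/mod3_ind: n => [|||n]; rewrite ?alpS3 //= /alp /=; ring.
Qed.

Section Shift_relations.

Variables (K : fieldType) (Q : K) (tau taub : 'I_3 -> par K -> K).

Definition tau_shift_relations (p : par K) (i : nat) : Prop :=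
  let a n := alp p n in
  let t n := tau (md3 n) p in
  let tb n := taub (md3 n) p in
  [/\ Tact Q i (tau (md3 i.-1)) p = t i,
      Tact Q i (taub (md3 i.-1)) p = tb i,
      Tact Q i (tau (md3 i.+1)) p =
        (a i.-1 ^+ 6 * t i * tb i.+1 + Q ^+ 2 * tb i * t i.+1)
          / (Q * a i.-1 ^+ 3 * tb i.-1)
    & Tact Q i (taub (md3 i.+1)) p =
        (Q ^+ 2 * a i.-1 ^+ 6 * t i.+1 * tb i + tb i.+1 * t i)
          / (Q * a i.-1 ^+ 3 * t i.-1)].

(* Stated from index 1 on: at i = 0 the truncated i.-1 is 0, not 2. *)
Lemma tau_shift_relationsS3 p n :
  tau_shift_relations p n.+1 -> tau_shift_relations p n.+4.
Proof. by rewrite /tau_shift_relations /= TactS3 !md3S3 alpS3. Qed.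

Lemma tau_shift_relations_all p :
  (forall i, (1 <= i <= 3)%N -> tau_shift_relations p i) ->
  forall n, tau_shift_relations p n.+1.
Proof.
move=> rel13; elim/mod3_ind => [|||n]; last exact: tau_shift_relationsS3.
all: exact: rel13.
Qed.

End Shift_relations.

Lemma div_mulr_swap (K : fieldType) (c u v w : K) :
  u != 0 -> c * w != 0 -> u = v / (c * w) -> w = v / (c * u).
Proof.
move=> unz cwnz uE; have vnz : v != 0.
  by apply: contraNneq unz => v0; rewrite uE v0 mul0r.
move: cwnz; rewrite mulf_eq0 => /norP[cnz wnz].
by rewrite uE; field; rewrite vnz cnz wnz.
Qed.

Section Solve.

(* a0, a1, a2 stand for alpha_{i-1}, alpha_i, alpha_{i+1}; t_k, b_k for tau and
   taub of index i - 1 + k; r2, s2, x, xb for T_i applied to tau_{i+1},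
   taub_{i+1}, tau_i, taub_i.  T_i divides alpha_i by Q, whence Q^-1 * a1 in
   t2E and b2E, the relations of T_{i+1} at the point T_i(alpha). *)
Variables (K : fieldType) (Q a0 a1 a2 t0 t1 t2 b0 b1 b2 r2 s2 x xb : K).

Hypotheses (Qnz : Q != 0) (prodQ : a0 * a1 * a2 = Q).
Hypotheses (t0nz : t0 != 0) (t2nz : t2 != 0) (b0nz : b0 != 0) (b2nz : b2 != 0).
Hypotheses (xnz : x != 0) (xbnz : xb != 0).

Hypothesis r2E : r2 = (a0 ^+ 6 * t1 * b2 + Q ^+ 2 * b1 * t2) / (Q * a0 ^+ 3 * b0).
Hypothesis s2E : s2 = (Q ^+ 2 * a0 ^+ 6 * t2 * b1 + b2 * t1) / (Q * a0 ^+ 3 * t0).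
Hypothesis t2E :
  t2 = ((Q^-1 * a1) ^+ 6 * r2 * b1 + Q ^+ 2 * s2 * t1) / (Q * (Q^-1 * a1) ^+ 3 * xb).
Hypothesis b2E :
  b2 = (Q ^+ 2 * (Q^-1 * a1) ^+ 6 * t1 * s2 + b1 * r2) / (Q * (Q^-1 * a1) ^+ 3 * x).

Let a_nz : [/\ a0 != 0, a1 != 0 & a2 != 0].
Proof. by move: Qnz; rewrite -prodQ !mulf_eq0 => /norP[/norP[-> ->] ->]. Qed.

Let c_nz : Q * (Q^-1 * a1) ^+ 3 != 0.
Proof. by case: a_nz => _ a1nz _; rewrite mulf_neq0 ?expf_neq0 ?mulf_neq0 ?invr_eq0. Qed.

Lemma T_tau_solution :
  x = 1 / (a2 ^+ 3 * a0 ^+ 6) * (t1 ^+ 2 / t0)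
      + a2 * a0 ^+ 4 / a1 ^+ 2 * (t1 * b1 / b0)
      + a1 ^+ 2 * a0 ^+ 2 / a2 * (b1 * t1 * t2 / (b2 * t0))
      + a2 ^+ 3 * (b1 ^+ 2 * t2 / (b2 * b0)).
Proof.
have [a0nz a1nz a2nz] := a_nz.
rewrite (div_mulr_swap b2nz (mulf_neq0 c_nz xnz) b2E).
rewrite r2E s2E -prodQ; field.
by rewrite a0nz a1nz a2nz t0nz b0nz b2nz.
Qed.

Lemma T_taub_solution :
  xb = 1 / (a2 ^+ 3 * a0 ^+ 6) * (b1 ^+ 2 / b0)
       + a1 ^+ 2 * a2 ^+ 5 * a0 ^+ 8 * (t1 * b1 / t0)
       + 1 / (a1 ^+ 2 * a2 ^+ 5 * a0 ^+ 2) * (t1 * b1 * b2 / (t2 * b0))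
       + a2 ^+ 3 * (t1 ^+ 2 * b2 / (t2 * t0)).
Proof.
have [a0nz a1nz a2nz] := a_nz.
rewrite (div_mulr_swap t2nz (mulf_neq0 c_nz xbnz) t2E).
rewrite r2E s2E -prodQ; field.
by rewrite a0nz a1nz a2nz t0nz b0nz t2nz.
Qed.

End Solve.

Theorem lemma3p2 (K : numClosedFieldType) (Q : K)
    (tau taub : 'I_3 -> par K -> K) :
  Q != 0 ->
  (forall p, admissible Q p -> forall k, tau k p != 0 /\ taub k p != 0) ->
  (forall p, admissible Q p -> forall i : nat, (1 <= i <= 3)%N ->
     let a n := alp p n in
     let t n := tau (md3 n) p in
     let tb n := taub (md3 n) p in
     [/\ Tact Q i (tau (md3 i.-1)) p = t i,
         Tact Q i (taub (md3 i.-1)) p = tb i,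
         Tact Q i (tau (md3 i.+1)) p =
           (a i.-1 ^+ 6 * t i * tb i.+1 + Q ^+ 2 * tb i * t i.+1)
             / (Q * a i.-1 ^+ 3 * tb i.-1)
       & Tact Q i (taub (md3 i.+1)) p =
           (Q ^+ 2 * a i.-1 ^+ 6 * t i.+1 * tb i + tb i.+1 * t i)
             / (Q * a i.-1 ^+ 3 * t i.-1)]) ->
  forall p, admissible Q p -> forall i : nat, (1 <= i <= 3)%N ->
     let a n := alp p n in
     let t n := tau (md3 n) p in
     let tb n := taub (md3 n) p in
     Tact Q i (tau (md3 i)) p =
       1 / (a i.+1 ^+ 3 * a i.-1 ^+ 6) * (t i ^+ 2 / t i.-1)
       + a i.+1 * a i.-1 ^+ 4 / a i ^+ 2 * (t i * tb i / tb i.-1)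
       + a i ^+ 2 * a i.-1 ^+ 2 / a i.+1 * (tb i * t i * t i.+1 / (tb i.+1 * t i.-1))
       + a i.+1 ^+ 3 * (tb i ^+ 2 * t i.+1 / (tb i.+1 * tb i.-1))
  /\ Tact Q i (taub (md3 i)) p =
       1 / (a i.+1 ^+ 3 * a i.-1 ^+ 6) * (tb i ^+ 2 / tb i.-1)
       + a i ^+ 2 * a i.+1 ^+ 5 * a i.-1 ^+ 8 * (t i * tb i / t i.-1)
       + 1 / (a i ^+ 2 * a i.+1 ^+ 5 * a i.-1 ^+ 2)
           * (t i * tb i * tb i.+1 / (t i.+1 * tb i.-1))
       + a i.+1 ^+ 3 * (t i ^+ 2 * tb i.+1 / (t i.+1 * t i.-1)).
Proof.
move=> Qnz tau_nz rel13 p p_adm [//|n] _ /=.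
have rel q : admissible Q q -> forall n, tau_shift_relations Q tau taub q n.+1.
  by move=> q_adm; apply: tau_shift_relations_all; exact: rel13.
have r_adm := Tpar_admissible Qnz n.+1 p_adm.
have m_adm := Tpar_admissible Qnz n.+2 r_adm.
have [t0_r tb0_r t2_r tb2_r] := rel p p_adm n.
have [_ _ t2E tb2E] := rel _ r_adm n.+1.
have [t2_m tb2_m _ _] := rel _ m_adm n.+2.
rewrite /Tact Tpar_cycle // md3S3 in t2_m tb2_m.
rewrite /Tact md3S3 alp_Tpar -t2_m -tb2_m in t2E tb2E.
rewrite /Tact /= in t0_r tb0_r t2_r tb2_r.
rewrite t0_r tb0_r in t2E tb2E.
have [t0nz b0nz] := tau_nz p p_adm (md3 n).
have [t2nz b2nz] := tau_nz p p_adm (md3 n.+2).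
have [xnz xbnz] := tau_nz _ r_adm (md3 n.+1).
have prodQ := alp_prod n p_adm.
split.
- exact: T_tau_solution Qnz prodQ t0nz b0nz b2nz xnz t2_r tb2_r tb2E.
- exact: T_taub_solution Qnz prodQ t0nz t2nz b0nz xbnz t2_r tb2_r t2E.
Qed.
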